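(* $\mathrm{cov}(\mathcal{M})\leq\mathfrak{s}(\mathbb{R})$.
   Context: $\mathrm{cov}(\mathcal{M})$ is the smallest number of meager subsets of $\mathbb{R}$ whose union is $\mathbb{R}$. For infinite sets $U, A$, say $U$ splits $A$ if both $A\cap U$ and $A\setminus U$ are infinite. $\mathfrak{s}(\mathbb{R})$ is the smallest cardinality of a family $\mathcal{U}$ of open subsets of $\mathbb{R}$ (usual topology) such that every infinite $A\subseteq\mathbb{R}$ is split by some $U\in\mathcal{U}$. *)

From HB Require Import structures.
From mathcomp Require Import all_boot all_order all_algebra.
From mathcomp Require Import all_classical all_reals all_analysis.
Set Implicit Arguments. Unset Strict Implicit. Unset Printing Implicit Defensive.
Local Open Scope classical_set_scope.

Definition nowhere_dense {T : topologicalType} (A : set T) : Prop :=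
  interior (closure A) = set0.

Definition meager {T : topologicalType} (A : set T) : Prop :=
  exists F : nat -> set T, (forall n, nowhere_dense (F n)) /\
    A `<=` \bigcup_n F n.

Definition infinite_set {T} (A : set T) : Prop := ~ finite_set A.

Definition splits {T} (U A : set T) : Prop :=
  infinite_set (A `&` U) /\ infinite_set (A `\` U).

From HB Require Import structures.
From mathcomp Require Import all_boot all_order all_algebra.
From mathcomp Require Import all_classical all_reals all_analysis.
Import numFieldNormedType.Exports.
Local Open Scope classical_set_scope.
Import GRing.Theory Num.Theory.

(* The boundary [closure U `\` U] of an open set is closed nowhere dense, hence
   meager, so it suffices to see that every x lies on the boundary of some U i.
   Take an injective sequence converging to x; its range is infinite, so some
   U i splits it. If x were in U i, almost all terms would be in U i; if x were
   outside closure (U i), almost all terms would avoid U i. *)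

Lemma nowhere_dense_meager {T : topologicalType} (A : set T) :
  nowhere_dense A -> meager A.
Proof. by move=> ndA; exists (fun=> A); split=> // x Ax; exists 0%N. Qed.

Lemma nowhere_dense_closureD_open {T : topologicalType} (U : set T) :
  open U -> nowhere_dense (closure U `\` U).
Proof.
move=> oU; have clB : closed (closure U `\` U).
  by rewrite setDE; apply: closedI; [exact: closed_closure | exact: open_closedC].
rewrite /nowhere_dense -(proj1 (closure_id _) clB).
apply/seteqP; split=> // y By.
have [Uy _] := interior_subset By.
(* The interior of the boundary is a neighbourhood of y, so it meets U. *)
by have [z [Uz [_ nUz]]] := Uy _ By.
Qed.

Lemma cvg_finite_setD_open {T : topologicalType} {u : nat -> T} {x : T}
    {W : set T} :
  u @ \oo --> x -> open W -> W x -> finite_set (range u `\` W).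
Proof.
move=> ux oW Wx.
have [N _ uW] : \forall n \near \oo, W (u n).
  by apply: ux; apply: open_nbhs_nbhs.
apply: (sub_finite_set _ (finite_image u (finite_II N))).
move=> _ [[n _ <-] nWun]; exists n => //=.
by case: (ltnP n N) => // /uW.
Qed.

Lemma splits_cvg_boundary {T : topologicalType} (u : nat -> T) (x : T)
    (U : set T) :
  u @ \oo --> x -> open U -> splits U (range u) -> (closure U `\` U) x.
Proof.
move=> ux oU [infI infD]; split.
- apply: contrapT => nclUx; apply: infI.
  have oW : open (~` closure U) by exact/closed_openC/closed_closure.
  apply: (sub_finite_set _ (cvg_finite_setD_open ux oW nclUx)).
  by move=> y [uy Uy]; split=> // /(_ (subset_closure Uy)).
- by move=> Ux; apply/infD/(cvg_finite_setD_open ux).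
Qed.

Lemma cvg_infinite_range {R : realType} (x : R) :
  exists u : nat -> R, u @ \oo --> x /\ infinite_set (range u).
Proof.
exists (fun n => x + n.+1%:R^-1)%R; split.
  rewrite -[X in _ --> X](addr0 x).
  by apply: cvgD; [exact: cvg_cst | exact: cvg_harmonic].
have u_inj : {in [set: nat] &, injective (fun n => x + n.+1%:R^-1 : R)%R}.
  by move=> m n _ _ /addrI/invr_inj/eqP; rewrite eqr_nat => /eqP [].
by rewrite (eq_finite_set (inj_card_eq u_inj)); exact: infinite_nat.
Qed.

Theorem theorem3p1 (R : realType) (I : Type) (U : I -> set R) :
  (forall i, open (U i)) ->
  (forall A : set R, infinite_set A -> exists i, splits (U i) A) ->
  exists M : I -> set R, (forall i, meager (M i)) /\ \bigcup_i M i = [set: R].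
Proof.
move=> oU splitU; exists (fun i => closure (U i) `\` U i); split.
  by move=> i; apply/nowhere_dense_meager/nowhere_dense_closureD_open.
apply/seteqP; split=> // x _.
have [u [ux infu]] := cvg_infinite_range x.
have [i Uiu] := splitU _ infu.
by exists i => //; exact: splits_cvg_boundary Uiu.
Qed.
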